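(* Let $X,Y$ be metric spaces and let $X\times Y$ carry a metric for which both projections $\mathrm{pr}_1:X\times Y\to X$ and $\mathrm{pr}_2:X\times Y\to Y$ are 1-Lipschitz. For any two Borel probability measures $\pi,\pi'$ on $X\times Y$, \[ |d_{\mathrm{conc}}^{\pi}(X,Y)-d_{\mathrm{conc}}^{\pi'}(X,Y)|\le 2\,d_{\mathrm P}(\pi,\pi'). \]
   Context: $\mathcal{L}ip_1(X)$ is the set of 1-Lipschitz functions $X\to\mathbb R$, and $\mathrm{pr}_1^*\mathcal{L}ip_1(X):=\{f\circ\mathrm{pr}_1:f\in\mathcal{L}ip_1(X)\}$ (similarly for $Y$). For a Borel probability measure $\pi$ on $X\times Y$ and measurable $F,G:X\times Y\to\mathbb R$, $d_{\mathrm{KF}}^\pi(F,G):=\inf\{\varepsilon\ge0:\pi(\{|F-G|>\varepsilon\})\le\varepsilon\}$, and $d_{\mathrm{conc}}^{\pi}(X,Y):=d_{\mathrm H}^{d_{\mathrm{KF}}^\pi}(\mathrm{pr}_1^*\mathcal{L}ip_1(X),\mathrm{pr}_2^*\mathcal{L}ip_1(Y))$, the Hausdorff distance with respect to $d_{\mathrm{KF}}^\pi$. $d_{\mathrm P}$ is the Prohorov metric on Borel probability measures on $X\times Y$. *)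

From HB Require Import structures.
From mathcomp Require Import all_boot all_order all_algebra.
From mathcomp Require Import all_classical all_reals all_analysis.
Set Implicit Arguments. Unset Strict Implicit. Unset Printing Implicit Defensive.
Import Order.TTheory GRing.Theory Num.Theory.
Local Open Scope classical_set_scope.
Local Open Scope ring_scope.

Section Defs.
Variable R : realType.

Definition is_metric (T : Type) (d : T -> T -> R) : Prop :=
  [/\ forall x y, 0 <= d x y,
      forall x y, d x y = 0 <-> x = y,
      forall x y, d x y = d y x &
      forall x y z, d x z <= d x y + d y z].

Definition metric_open (T : Type) (d : T -> T -> R) : set (set T) :=
  [set U | forall x, U x -> exists2 e : R, 0 < e & forall y, d x y < e -> U y].

Definition borel_type (T : pointedType) (d : T -> T -> R) : measurableType _ :=
  g_sigma_algebraType (metric_open d).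

Definition Lip1 (T : Type) (d : T -> T -> R) : set (T -> R) :=
  [set f | forall x x', `|f x - f x'| <= d x x'].

Definition dKF (T : Type) (pi : set T -> \bar R) (F G : T -> R) : R :=
  inf [set e : R | 0 <= e /\ (pi [set z | (e < `|F z - G z|)%R] <= e%:E)%E].

Definition hausdorff (U : Type) (d : U -> U -> R) (A B : set U) : R :=
  Num.max (sup [set inf [set d a b | b in B] | a in A])
          (sup [set inf [set d a b | a in A] | b in B]).

Definition dconc (X Y : Type) (dX : X -> X -> R) (dY : Y -> Y -> R)
    (pi : set (X * Y) -> \bar R) : R :=
  hausdorff (dKF pi)
    [set f \o fst | f in Lip1 dX] [set g \o snd | g in Lip1 dY].

Definition nbhd_eps (T : Type) (d : T -> T -> R) (e : R) (A : set T) : set T :=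
  [set z | exists2 a, A a & d z a < e].

Definition prohorov (T : pointedType) (d : T -> T -> R)
    (mu nu : probability (borel_type d) R) : R :=
  inf [set e : R | 0 < e /\
    forall A : set (borel_type d), measurable A ->
      (mu A <= nu (nbhd_eps d e A) + e%:E)%E /\
      (nu A <= mu (nbhd_eps d e A) + e%:E)%E].

End Defs.

From HB Require Import structures.
From mathcomp Require Import all_boot all_order all_algebra.
From mathcomp Require Import all_classical all_reals all_analysis.
From mathcomp Require Import ring lra.
Set Implicit Arguments. Unset Strict Implicit. Unset Printing Implicit Defensive.
Import Order.TTheory GRing.Theory Num.Theory.
Local Open Scope classical_set_scope.
Local Open Scope ring_scope.

(* If [pi'(A) <= pi(A^e) + e] for all Borel [A], then for [h := f o pr1 - g o pr2],
   which is 2-Lipschitz for the product metric, the e-neighbourhood of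
   [{x + 2e < |h|}] lies inside [{x < |h|}]; hence [dKF^pi'] exceeds [dKF^pi] by at
   most [2e] on every pair of 1-Lipschitz functions, and this bound passes to the
   Hausdorff distances.  Exchanging [pi] and [pi'] and taking the infimum over all
   admissible [e] gives the factor [2 dP]. *)

Section HausdorffShift.
Variable R : realType.

Lemma sup_inf_leD (U V : Type) (A : set U) (B : set V) (F F' : U -> V -> R)
    (M c : R) :
  A !=set0 -> B !=set0 ->
  (forall a b, A a -> B b -> 0 <= F a b <= M) ->
  (forall a b, A a -> B b -> 0 <= F' a b) ->
  (forall a b, A a -> B b -> F' a b <= F a b + c) ->
  sup [set inf [set F' a b | b in B] | a in A] <=
  sup [set inf [set F a b | b in B] | a in A] + c.
Proof.
move=> [a0 Aa0] [b0 Bb0] hF hF' hle.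
apply: ge_sup; first by exists (inf [set F' a0 b | b in B]); exists a0.
move=> _ [a Aa <-].
have infF'_le : inf [set F' a b | b in B] - c <= inf [set F a b | b in B].
  apply: lb_le_inf; first by exists (F a b0); exists b0.
  move=> _ [b Bb <-]; rewrite lerBlDr.
  apply: le_trans (hle a b Aa Bb).
  apply: ge_inf; last by exists b.
  by exists 0 => _ [b' Bb' <-]; exact: hF'.
have infF_le_sup :
    inf [set F a b | b in B] <= sup [set inf [set F a b | b in B] | a in A].
  apply: ub_le_sup; last by exists a.
  exists M => _ [a' Aa' <-].
  have /andP[_ FM] := hF a' b0 Aa' Bb0.
  apply: le_trans FM; apply: ge_inf; last by exists b0.
  by exists 0 => _ [b' Bb' <-]; have /andP[] := hF a' b' Aa' Bb'.
by rewrite -lerBlDr; apply: le_trans infF_le_sup.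
Qed.

Lemma hausdorff_leD (U : Type) (d d' : U -> U -> R) (A B : set U) (M c : R) :
  A !=set0 -> B !=set0 ->
  (forall a b, A a -> B b -> 0 <= d a b <= M) ->
  (forall a b, A a -> B b -> 0 <= d' a b) ->
  (forall a b, A a -> B b -> d' a b <= d a b + c) ->
  hausdorff d' A B <= hausdorff d A B + c.
Proof.
move=> nA nB hd hd' hle; rewrite /hausdorff ge_max; apply/andP; split.
- apply: le_trans (sup_inf_leD nA nB hd hd' hle) _.
  by rewrite lerD2r le_max lexx.
- apply: le_trans (@sup_inf_leD _ _ B A (fun b a => d a b) (fun b a => d' a b)
    M c nB nA _ _ _) _.
  + by move=> b a Bb Aa; exact: hd.
  + by move=> b a Bb Aa; exact: hd'.
  + by move=> b a Bb Aa; exact: hle.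
  by rewrite lerD2r le_max lexx orbT.
Qed.

End HausdorffShift.

Section KyFanShift.
Variables (R : realType) (T : pointedType) (d : T -> T -> R).
Hypothesis metric_d : is_metric d.

Lemma metric_open_measurable (U : set T) :
  metric_open d U -> measurable (U : set (borel_type d)).
Proof. exact: sub_sigma_algebra. Qed.

Lemma metric_open_nbhd_eps (e : R) (A : set T) : metric_open d (nbhd_eps d e A).
Proof.
case: metric_d => _ _ dC dT.
move=> z [a Aa dza]; exists (e - d z a); first lra.
move=> y dzy; exists a => //.
by have := dT y z a; rewrite (dC y z); lra.
Qed.

Variables (F G : T -> R) (L : R).
Hypothesis L_ge1 : 1 <= L.
Let L_gt0 : 0 < L := lt_le_trans ltr01 L_ge1.
Hypothesis lipFG : forall z z', `|(F z - G z) - (F z' - G z')| <= L * d z z'.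

Lemma metric_open_gt_dist (x : R) : metric_open d [set z | x < `|F z - G z|].
Proof.
move=> z /= xz; exists ((`|F z - G z| - x) / L).
  by apply: divr_gt0 => //; rewrite subr_gt0.
move=> y; rewrite ltr_pdivlMr //.
have := lerB_dist (F z - G z) (F y - G y); have := lipFG z y; lra.
Qed.

Lemma nbhd_eps_gt_dist_sub (x e : R) :
  nbhd_eps d e [set z | x + L * e < `|F z - G z|] `<=`
  [set z | x < `|F z - G z|].
Proof.
move=> z [a /= xa dza].
have := lerB_dist (F a - G a) (F z - G z); rewrite distrC.
have := lipFG z a; have : L * d z a <= L * e by rewrite ler_pM2l // ltW.
lra.
Qed.

Lemma dKF_feasible1 (P : probability (borel_type d) R) :
  [set e : R | 0 <= e /\ (P [set z | (e < `|F z - G z|)%R] <= e%:E)%E] 1.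
Proof.
split; first lra.
by apply: probability_le1; apply: metric_open_measurable; exact: metric_open_gt_dist.
Qed.

Lemma dKF_ge0 (P : probability (borel_type d) R) : 0 <= dKF P F G.
Proof. by apply: lb_le_inf => [|e []//]; exists 1; exact: dKF_feasible1. Qed.

Lemma dKF_le1 (P : probability (borel_type d) R) : dKF P F G <= 1.
Proof. by apply: ge_inf; [exists 0 => e [] | exact: dKF_feasible1]. Qed.

Lemma dKF_leD_eps (P P' : probability (borel_type d) R) (e : R) : 0 < e ->
  (forall A : set (borel_type d), measurable A ->
     (P' A <= P (nbhd_eps d e A) + e%:E)%E) ->
  dKF P' F G <= dKF P F G + L * e.
Proof.
move=> e_gt0 P'_le; rewrite /dKF -lerBlDr.
apply: lb_le_inf; first by exists 1; exact: dKF_feasible1.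
move=> x [x_ge0 Px]; rewrite lerBlDr.
apply: ge_inf; first by exists 0 => y [].
split; first by rewrite addr_ge0 // mulr_ge0 // ltW.
set A := [set z | x + L * e < `|F z - G z|].
have mA : measurable (A : set (borel_type d)).
  by apply: metric_open_measurable; exact: metric_open_gt_dist.
apply: le_trans (P'_le A mA) _.
have PAe_le : (P (nbhd_eps d e A) <= P [set z | (x < `|F z - G z|)%R])%E.
  apply: le_measure; rewrite ?inE; last exact: nbhd_eps_gt_dist_sub.
  - by apply: metric_open_measurable; exact: metric_open_nbhd_eps.
  - by apply: metric_open_measurable; exact: metric_open_gt_dist.
apply: le_trans (leeD2r _ (le_trans PAe_le Px)) _.
by rewrite -EFinD lee_fin lerD2l ler_peMl // ltW.
Qed.

End KyFanShift.

Lemma Lip1_cst (R : realType) (T : Type) (d : T -> T -> R) (c : R) :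
  (forall x y, 0 <= d x y) -> Lip1 d (fun=> c).
Proof. by move=> d_ge0 x y; rewrite subrr normr0 d_ge0. Qed.

Lemma prohorov_ge (R : realType) (T : pointedType) (d : T -> T -> R)
    (mu nu : probability (borel_type d) R) (c : R) :
  (forall e : R, 0 < e ->
    (forall A : set (borel_type d), measurable A ->
      (mu A <= nu (nbhd_eps d e A) + e%:E)%E /\
      (nu A <= mu (nbhd_eps d e A) + e%:E)%E) -> c <= e) ->
  c <= prohorov mu nu.
Proof.
move=> c_le; apply: lb_le_inf => [|e [e_gt0 /c_le]]; last exact.
exists 1; split => // A mA.
by split; apply: le_trans (probability_le1 _ mA) _;
  rewrite addeC leeDl // measure_ge0.
Qed.

Section ConcentrationShift.
Variables (R : realType) (X Y : pointedType).
Variables (dX : X -> X -> R) (dY : Y -> Y -> R) (dZ : X * Y -> X * Y -> R).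
Hypotheses (metric_dX : is_metric dX) (metric_dY : is_metric dY).
Hypothesis metric_dZ : is_metric dZ.
Hypothesis dX_le : forall z z' : X * Y, dX z.1 z'.1 <= dZ z z'.
Hypothesis dY_le : forall z z' : X * Y, dY z.2 z'.2 <= dZ z z'.

Lemma Lip1_sub_proj (f : X -> R) (g : Y -> R) : Lip1 dX f -> Lip1 dY g ->
  forall z z', `|(f z.1 - g z.2) - (f z'.1 - g z'.2)| <= 2 * dZ z z'.
Proof.
move=> f_lip g_lip z z'.
have -> : (f z.1 - g z.2) - (f z'.1 - g z'.2) = (f z.1 - f z'.1) + (g z'.2 - g z.2)
  by ring.
apply: le_trans (ler_normD _ _) _.
have := f_lip z.1 z'.1; have := g_lip z.2 z'.2; rewrite distrC.
have := dX_le z z'; have := dY_le z z'; lra.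
Qed.

Let one_le_two : 1 <= 2 :> R. Proof. by rewrite ler1n. Qed.

Lemma dconc_leD_eps (pi pi' : probability (borel_type dZ) R) (e : R) : 0 < e ->
  (forall A : set (borel_type dZ), measurable A ->
     (pi' A <= pi (nbhd_eps dZ e A) + e%:E)%E) ->
  dconc dX dY pi' <= dconc dX dY pi + 2 * e.
Proof.
move=> e_gt0 pi'_le; apply: (@hausdorff_leD _ _ _ _ _ _ 1).
- by exists (fun=> 0) => //; exists (fun=> 0) => //; apply: Lip1_cst; case: metric_dX.
- by exists (fun=> 0) => //; exists (fun=> 0) => //; apply: Lip1_cst; case: metric_dY.
- move=> _ _ [f f_lip <-] [g g_lip <-].
  have lip := Lip1_sub_proj f_lip g_lip.
  by rewrite (dKF_ge0 one_le_two lip) (dKF_le1 one_le_two lip).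
- move=> _ _ [f f_lip <-] [g g_lip <-].
  exact: (dKF_ge0 one_le_two (Lip1_sub_proj f_lip g_lip)).
- move=> _ _ [f f_lip <-] [g g_lip <-].
  exact: (dKF_leD_eps metric_dZ one_le_two (Lip1_sub_proj f_lip g_lip) e_gt0).
Qed.

End ConcentrationShift.

Theorem lemma5p7 (R : realType) (X Y : pointedType)
    (dX : X -> X -> R) (dY : Y -> Y -> R) (dZ : X * Y -> X * Y -> R) :
  is_metric dX -> is_metric dY -> is_metric dZ ->
  (forall z z' : X * Y, dX z.1 z'.1 <= dZ z z') ->
  (forall z z' : X * Y, dY z.2 z'.2 <= dZ z z') ->
  forall pi pi' : probability (borel_type dZ) R,
    `|dconc dX dY pi - dconc dX dY pi'| <= 2 * prohorov pi pi'.
Proof.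
move=> metric_dX metric_dY metric_dZ dX_le dY_le pi pi'.
suff : `|dconc dX dY pi - dconc dX dY pi'| / 2 <= prohorov pi pi' by lra.
apply: prohorov_ge => e e_gt0 pi_pi'_close.
have := dconc_leD_eps metric_dX metric_dY metric_dZ dX_le dY_le e_gt0
  (fun A mA => (pi_pi'_close A mA).1).
have := dconc_leD_eps metric_dX metric_dY metric_dZ dX_le dY_le e_gt0
  (fun A mA => (pi_pi'_close A mA).2).
rewrite ler_pdivrMr // ler_norml; lra.
Qed.
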